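(* Let $e\ge2$, let $\lambda$ be an $e$-regular partition with outer corners $c_1<\dots<c_r$ and inner corners $i_1<\dots<i_{r+1}$, and let $\omega^{(0)},\dots,\omega^{(r)}$ and $h_1,\dots,h_r$ be as in the outer flattening construction. Then for each $k\in\{1,\dots,r\}$: $h_k\in[i_k-1,i_k)$; the functions $\omega^{(k-1)}$ and $\omega^{(k)}$ coincide outside $(i_k-1,c_k)$; and $0\le\omega^{(k)}(s)-\omega^{(k-1)}(s)\le e$ for all $s\in(i_k-1,c_k)$.
   Context: A partition $\lambda=(\lambda_1\ge\dots\ge\lambda_h>0)$ is $e$-regular if $\lambda_i>\lambda_{i+e-1}$ for all $i\le h-e+1$. $Y(\lambda)=\{(a,b):1\le a\le h,1\le b\le\lambda_a\}$; node $(a,b)$ corresponds to the closed square with vertices $(a-b,a+b),(a-b\pm1,a+b-1),(a-b,a+b-2)$, and $\omega_\lambda(x)=\max(|x|,\sup\{y:(x,y)\text{ lies in one of these squares}\})$; $\omega_\lambda$ is piecewise linear with slope $\pm1$ on each $(k,k+1)$, $k\in\mathbb Z$. An integer $c$ is an outer (resp. inner) corner if $\omega_\lambda'=1$ on $(c-1,c)$ and $-1$ on $(c,c+1)$ (resp. $-1$ then $1$). Let $\alpha_e=1-2e^{-1}$. Outer flattening: $\omega^{(0)}=\omega_\lambda$; for $k=1,\dots,r$, let $h_k<c_k$ be the abscissa of the first point where the line of slope $\alpha_e$ through $(c_k,\omega_\lambda(c_k))$, followed from $c_k$ in the negative direction, meets the graph of $\omega^{(k-1)}$; define $\omega^{(k)}=\omega^{(k-1)}$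 on $(-\infty,h_k]\cup[c_k,\infty)$ and $\omega^{(k)}(s)=\omega_\lambda(c_k)+\alpha_e(s-c_k)$ for $s\in[h_k,c_k]$. *)

From HB Require Import structures.
From mathcomp Require Import all_boot all_order all_algebra.
From mathcomp Require Import all_classical all_reals all_analysis.
Set Implicit Arguments. Unset Strict Implicit. Unset Printing Implicit Defensive.
Import Order.TTheory GRing.Theory Num.Theory.
Import numFieldNormedType.Exports.
Local Open Scope classical_set_scope.
Local Open Scope ring_scope.

(* A partition is a seq nat: lambda = [:: l_1; ...; l_h], l_1 >= ... >= l_h > 0.
   l_a (1-indexed) is  nth 0 lam a.-1. *)
Definition is_partition (lam : seq nat) : Prop :=
  sorted geq lam /\ all (fun x => 0 < x)%N lam.

Definition e_regular (e : nat) (lam : seq nat) : Prop :=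
  forall i : nat, (1 <= i)%N -> (i + e - 1 <= size lam)%N ->
    (nth 0 lam (i + e - 1).-1 < nth 0 lam i.-1)%N.

Definition node (lam : seq nat) (a b : nat) : Prop :=
  (1 <= a <= size lam)%N /\ (1 <= b <= nth 0 lam a.-1)%N.

(* the closed square with vertices (a-b,a+b), (a-b+-1,a+b-1), (a-b,a+b-2) *)
Definition node_square {R : realType} (a b : nat) : set (R * R) :=
  [set p | `|p.1 - (a%:R - b%:R)| + `|p.2 - (a%:R + b%:R - 1)| <= 1].

Definition omega {R : realType} (lam : seq nat) (x : R) : R :=
  Num.max `|x|
    (sup [set y : R | exists a b, node lam a b /\ node_square a b (x, y)]).

Definition outer_corner {R : realType} (w : R -> R) (c : int) : Prop :=
  (forall x : R, c%:~R - 1 < x < c%:~R -> is_derive x 1 w 1) /\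
  (forall x : R, c%:~R < x < c%:~R + 1 -> is_derive x 1 w (-1)).

Definition inner_corner {R : realType} (w : R -> R) (c : int) : Prop :=
  (forall x : R, c%:~R - 1 < x < c%:~R -> is_derive x 1 w (-1)) /\
  (forall x : R, c%:~R < x < c%:~R + 1 -> is_derive x 1 w 1).

Definition alpha {R : realType} (e : nat) : R := 1 - 2 / e%:R.

(* The outer flattening: w k = omega^{(k)}, h k = h_k (k = 1..r), with
   c_k = nth 0 cs k.-1.  Here L_k(s) = omega_lambda(c_k) + alpha_e (s - c_k). *)
Definition outer_flattening {R : realType} (e : nat) (lam : seq nat)
    (cs : seq int) (w : nat -> R -> R) (h : nat -> R) : Prop :=
  w 0%N = omega lam /\
  forall k : nat, (1 <= k <= size cs)%N ->
    let c : R := (nth 0 cs k.-1)%:~R in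
    let L := fun s : R => omega lam c + alpha e * (s - c) in
    [/\ h k < c,
        w k.-1 (h k) = L (h k),
        (forall s : R, h k < s < c -> w k.-1 s != L s) &
        (forall s : R, w k s = if (h k <= s <= c) then L s else w k.-1 s)].

(* omega_lambda is the maximum of |x| and of the row tents
   min (x + 2 lambda_a, 2 a - x), all lines of slope 1 or -1 with even integer
   intercepts, so it is affine with slope 1 or -1 on every [n, n + 1] and its
   corners are the sign changes of the slope sequence.  Counting sign changes
   from the far left, where the slope is -1, places the k-th inner corner i_k
   before c_k, with slope -1 on [i_k - 1, i_k] and slope 1 on [i_k, c_k].  The
   outer corner c_k is the apex of a row, and on [i_k, c_k] the graph climbs
   through the apexes of c_k - i_k consecutive rows, which therefore have equal
   length; e-regularity gives c_k - i_k <= e - 1.  The earlier flattenings only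
   change omega left of c_(k-1) <= i_k - 1, so the line of slope alpha_e through
   c_k first meets the graph at i_k - (c_k - i_k) / (e - 1), in [i_k - 1, i_k),
   and lies above it by at most 2 (c_k - i_k) / e <= e. *)

From HB Require Import structures.
From mathcomp Require Import all_boot all_order all_algebra.
From mathcomp Require Import all_classical all_reals all_analysis.
From mathcomp Require Import lra zify.
Import Order.TTheory GRing.Theory Num.Theory.
Import numFieldNormedType.Exports.
Local Open Scope ring_scope.
Set Implicit Arguments. Unset Strict Implicit. Unset Printing Implicit Defensive.

Section PmAffine.
Variable R : realFieldType.
Implicit Types (f g : R -> R) (n : int) (x : R).

Definition pm_line (b : bool) (m : int) x : R := (if b then x else - x) + 2 * m%:~R.

Definition pm_affine_on f n : Prop :=
  exists b m, forall x, n%:~R <= x <= n%:~R + 1 -> f x = pm_line b m x.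

Lemma unit_interval_side n k :
  (forall x, n%:~R <= x <= n%:~R + 1 -> k%:~R <= x) \/
  (forall x, n%:~R <= x <= n%:~R + 1 -> x <= k%:~R).
Proof.
have [kn|nk] := leP k n; [left => x /andP[nx _] | right => x /andP[_ xn]].
  by apply: le_trans nx; rewrite ler_int.
by apply: le_trans xn _; rewrite -intrD1 ler_int; lia.
Qed.

(* Lines of slopes 1 and -1 with even integer intercepts cross at an integer,
   so on a unit interval one of two such lines dominates the other. *)
Lemma pm_lines_ordered n b1 m1 b2 m2 :
  (forall x, n%:~R <= x <= n%:~R + 1 -> pm_line b1 m1 x <= pm_line b2 m2 x) \/
  (forall x, n%:~R <= x <= n%:~R + 1 -> pm_line b2 m2 x <= pm_line b1 m1 x).
Proof.
rewrite /pm_line; case: b1; case: b2.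
- by have [m12|m21] := leP m1 m2; [left|right] => x _;
    rewrite lerD2l ler_pM2l // ler_int // ltW.
- have [H|H] := unit_interval_side n (m2 - m1); [right|left] => x /H;
    rewrite intrB; lra.
- have [H|H] := unit_interval_side n (m1 - m2); [left|right] => x /H;
    rewrite intrB; lra.
- by have [m12|m21] := leP m1 m2; [left|right] => x _;
    rewrite lerD2l ler_pM2l // ler_int // ltW.
Qed.

Lemma pm_affine_max f g n : pm_affine_on f n -> pm_affine_on g n ->
  pm_affine_on (fun x => Num.max (f x) (g x)) n.
Proof.
move=> [b1 [m1 fE]] [b2 [m2 gE]].
have [H|H] := pm_lines_ordered n b1 m1 b2 m2.
  by exists b2, m2 => x xn; rewrite fE // gE //; apply/max_idPr/H.
by exists b1, m1 => x xn; rewrite fE // gE //; apply/max_idPl/H.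
Qed.

Lemma pm_affine_min f g n : pm_affine_on f n -> pm_affine_on g n ->
  pm_affine_on (fun x => Num.min (f x) (g x)) n.
Proof.
move=> [b1 [m1 fE]] [b2 [m2 gE]].
have [H|H] := pm_lines_ordered n b1 m1 b2 m2.
  by exists b1, m1 => x xn; rewrite fE // gE //; apply/min_idPl/H.
by exists b2, m2 => x xn; rewrite fE // gE //; apply/min_idPr/H.
Qed.

Lemma pm_affine_abs n : pm_affine_on (fun x => `|x|) n.
Proof.
have -> : (fun x => `|x|) = fun x => Num.max x (- x) by apply: funext => x; rewrite maxrN.
by apply: pm_affine_max; [exists true, 0 | exists false, 0] => x _;
  rewrite /pm_line mulr0 addr0.
Qed.

Definition slope f n : R := f (n%:~R + 1) - f n%:~R.

Section Slopes.
Variable f : R -> R.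
Hypothesis f_pm : forall n, pm_affine_on f n.

Lemma affine_on_unit n x : n%:~R <= x <= n%:~R + 1 ->
  f x = f n%:~R + slope f n * (x - n%:~R).
Proof.
have [b [m fE]] := f_pm n; rewrite /slope => xn.
rewrite !fE ?xn ?lexx ?lerDl ?ler01 ?andbT // /pm_line; case: b {fE}; lra.
Qed.

Lemma slope_pm1 n : slope f n = 1 \/ slope f n = -1.
Proof.
have [b [m fE]] := f_pm n; rewrite /slope.
rewrite !fE ?lexx ?lerDl ?ler01 ?andbT // /pm_line; case: b {fE}; [left|right]; lra.
Qed.

Lemma falling_unit n x : slope f (n - 1) = -1 -> n%:~R - 1 <= x <= n%:~R ->
  f x = f n%:~R + (n%:~R - x).
Proof.
move=> fall xn; have xn' : (n - 1)%:~R <= x <= (n - 1)%:~R + 1 by rewrite intrB subrK.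
by rewrite (affine_on_unit xn') fall; move: fall; rewrite /slope intrB subrK; lra.
Qed.

Lemma rising_run (i c : int) : (forall n, i <= n < c -> slope f n = 1) ->
  forall x, i%:~R <= x <= c%:~R -> f x = f c%:~R - (c%:~R - x).
Proof.
move=> rise.
suff run t x : (c - t%:Z)%:~R <= x <= c%:~R -> i <= c - t%:Z ->
    f x = f c%:~R - (c%:~R - x).
  move=> x /andP[ix xc]; have ic : i <= c by rewrite -(ler_int R); apply: le_trans xc.
  have ciE : c - `|c - i|%N%:Z = i by lia.
  by apply: (run `|c - i|%N); rewrite ciE ?ix ?xc.
elim: t x => [|t IH] x.
  rewrite subr0 => /andP[cx xc] _.
  have -> : x = c%:~R by apply/le_anti; rewrite xc cx.
  by rewrite subrr subr0.
move=> /andP[tx xc] it; have [tx'|xt] := lerP (c - t%:Z)%:~R x.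
  by apply: IH; [rewrite tx' | lia].
have nE : c - t%:Z = (c - t.+1%:Z) + 1 by lia.
rewrite nE intrD1 in IH xt.
have xn : (c - t.+1%:Z)%:~R <= x <= (c - t.+1%:Z)%:~R + 1 by rewrite tx ltW.
have n_rise : slope f (c - t.+1%:Z) = 1 by apply: rise; lia.
have tc : (c - t.+1%:Z)%:~R + 1 <= c%:~R :> R by rewrite -intrD1 ler_int; lia.
have it1 : i <= c - t.+1%:Z + 1 by lia.
have := IH ((c - t.+1%:Z)%:~R + 1); rewrite lexx tc => /(_ isT it1).
rewrite (affine_on_unit xn) n_rise; move: n_rise; rewrite /slope; lra.
Qed.
End Slopes.
End PmAffine.

Section Corners.
Variables (R : realType) (f : R -> R).
Hypothesis f_pm : forall n, pm_affine_on f n.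

Lemma is_derive_unit_iff (n : int) (d : R) :
  (forall x : R, n%:~R < x < n%:~R + 1 -> is_derive x 1 f d) <-> slope f n = d.
Proof.
have D (x : R) : n%:~R < x < n%:~R + 1 -> is_derive x 1 f (slope f n).
  move=> xn; pose g y := (f n%:~R - slope f n * n%:~R) + slope f n *: y.
  have : is_derive x 1 g (0 + slope f n *: 1) by apply: is_deriveD.
  rewrite add0r scaler1; apply: near_eq_is_derive.
  have : x \in `]n%:~R, n%:~R + 1[ by rewrite in_itv.
  move/near_in_itvoo; apply: filterS => y; rewrite in_itv /= => /andP[ny yn].
  rewrite /g (@affine_on_unit _ _ f_pm n y) ?(ltW ny) ?(ltW yn) //.
  (* [*:] on [R] is the product. *)
  by rewrite -[LHS]/(f n%:~R - slope f n * n%:~R + slope f n * y); lra.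
split=> [fd|<-]; last exact: D.
have mid : n%:~R < (n%:~R + 2^-1 : R) < n%:~R + 1 by apply/andP; split; lra.
by rewrite -(derive_val (is_derive := fd _ mid)) (derive_val (is_derive := D _ mid)).
Qed.

Lemma outer_corner_slope (c : int) :
  outer_corner f c <-> slope f (c - 1) = 1 /\ slope f c = -1.
Proof. by rewrite /outer_corner -!is_derive_unit_iff intrB subrK. Qed.

Lemma inner_corner_slope (c : int) :
  inner_corner f c <-> slope f (c - 1) = -1 /\ slope f c = 1.
Proof. by rewrite /inner_corner -!is_derive_unit_iff intrB subrK. Qed.

End Corners.

Lemma foldr_max_ge_init (R : realDomainType) (y0 : R) s : y0 <= foldr Num.max y0 s.
Proof. by elim: s => //= y s IH; rewrite le_max IH orbT. Qed.

Lemma foldr_max_ge (R : realDomainType) (y0 y : R) s :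
  y \in s -> y <= foldr Num.max y0 s.
Proof.
elim: s => //= z s IH; rewrite inE le_max => /predU1P[->|/IH->]; by rewrite ?lexx ?orbT.
Qed.

Lemma foldr_max_mem (R : realDomainType) (y0 : R) s : foldr Num.max y0 s \in y0 :: s.
Proof.
elim: s => [|y s IH] /=; first by rewrite mem_seq1.
rewrite maxEle; case: ifP => _; last by rewrite !inE eqxx orbT.
by move: IH; rewrite !inE => /orP[->|->]; rewrite ?orbT.
Qed.

Lemma nth_le_sumn (s : seq nat) j : (nth 0 s j <= sumn s)%N.
Proof.
elim: s j => [|y s IH] [|j] //=; first exact: leq_addr.
exact: leq_trans (IH j) (leq_addl _ _).
Qed.

Lemma partition_nth_le lam i j : is_partition lam -> (i <= j < size lam)%N ->
  (nth 0 lam j <= nth 0 lam i)%N.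
Proof.
move=> [lam_sorted _] /andP[ij jl].
apply: (sorted_leq_nth (rev_trans leq_trans) leqnn) => //.
by rewrite inE (leq_ltn_trans ij).
Qed.

Section ClosedForm.
Variable R : realType.
Implicit Types (lam : seq nat) (x : R).
Local Open Scope classical_set_scope.

(* The tent with apex (a - l, a + l): on its right slope it runs along the tops
   of the squares of the nodes (a, b), b <= l, of a row a of length l. *)
Definition row_top (a l : nat) x : R := Num.min (x + 2 * l%:R) (2 * a%:R - x).

Definition profile lam x : R :=
  foldr Num.max `|x| [seq row_top j.+1 (nth 0 lam j) x | j <- iota 0 (size lam)].

Lemma pm_affine_row_top a l n : pm_affine_on (row_top a l) n.
Proof.
by apply: pm_affine_min; [exists true, l%:Z | exists false, a%:Z] => x _;
  rewrite /pm_line // addrC.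
Qed.

Lemma pm_affine_profile lam n : pm_affine_on (profile lam) n.
Proof.
rewrite /profile; elim: (iota 0 (size lam)) => [|j r IH] /=; first exact: pm_affine_abs.
exact: pm_affine_max (pm_affine_row_top _ _ _) IH.
Qed.

Lemma profile_attained lam x : profile lam x = `|x| \/
  exists2 j, (j < size lam)%N & profile lam x = row_top j.+1 (nth 0 lam j) x.
Proof.
rewrite /profile.
have := foldr_max_mem `|x| [seq row_top j.+1 (nth 0 lam j) x | j <- iota 0 (size lam)].
rewrite inE => /predU1P[->|/mapP[j]]; [by left | rewrite mem_iota => /andP[_ jl] ->].
by right; exists j.
Qed.

Lemma abs_le_profile lam x : `|x| <= profile lam x.
Proof. exact: foldr_max_ge_init. Qed.

Lemma row_top_le_profile lam j x : (j < size lam)%N ->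
  row_top j.+1 (nth 0 lam j) x <= profile lam x.
Proof. by move=> jl; apply/foldr_max_ge/map_f; rewrite mem_iota. Qed.

Lemma square_top_le_row_top lam a b x : node lam a b ->
  a%:R + b%:R - `|x - (a%:R - b%:R)| <= row_top a (nth 0 lam a.-1) x.
Proof.
move=> [_ /andP[_ bl]]; rewrite /row_top le_min.
have : b%:R <= (nth 0 lam a.-1)%:R :> R by rewrite ler_nat.
have [xab|xab] := lerP 0 (x - (a%:R - b%:R));
  [rewrite ger0_norm // | rewrite ltr0_norm //]; move=> ?; apply/andP; split; lra.
Qed.

Lemma square_le_profile lam a b x y : node lam a b -> node_square a b (x, y) ->
  y <= profile lam x.
Proof.
move=> ab; rewrite /node_square /= => sq; have [/andP[a1 al] _] := ab.
have a_row : (a.-1 < size lam)%N by rewrite prednK.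
apply: le_trans (row_top_le_profile x a_row); rewrite prednK //.
apply: le_trans (square_top_le_row_top x ab).
by have := ler_norm (y - (a%:R + b%:R - 1)); lra.
Qed.

Lemma omega_le_profile lam x : omega lam x <= profile lam x.
Proof.
rewrite /omega ge_max abs_le_profile /=; set S := [set y | _].
have [->|/set0P S0] := eqVneq S set0.
  by rewrite sup0; apply: le_trans (abs_le_profile lam x).
by apply: ge_sup S0 _ => y [a [b [ab sq]]]; apply: square_le_profile ab sq.
Qed.

Lemma abs_le_omega lam x : `|x| <= omega lam x.
Proof. by rewrite /omega le_max lexx. Qed.

Lemma square_top_le_omega lam a b x : node lam a b ->
  `|x - (a%:R - b%:R)| <= 1 -> a%:R + b%:R - `|x - (a%:R - b%:R)| <= omega lam x.
Proof.
move=> ab near_ab; rewrite /omega le_max; apply/orP; right.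
apply: ub_le_sup; first by exists (profile lam x) => y [a' [b' [nd sq]]];
  apply: square_le_profile nd sq.
exists a, b; split => //; rewrite /node_square /=.
set d := `|_|.
rewrite (_ : _ - (a%:R + b%:R - 1) = 1 - d); last by lra.
by rewrite ger0_norm ?subr_ge0 // addrC subrK.
Qed.

Lemma row_right_edge_le_omega lam a x : (1 <= a <= size lam)%N ->
  a%:R - (nth 0 lam a.-1)%:R < x -> 2 * a%:R - x <= omega lam x.
Proof.
move=> a_row; set l := nth 0 lam a.-1 => lx.
have [ax|xa] := lerP a%:R x.
  by apply: le_trans (abs_le_omega lam x); apply: le_trans (ler_norm x); lra.
have ax : 0 <= a%:R - x by lra.
have /andP[tx xt] := truncn_itv ax.
set t := Num.truncn _ in tx xt; rewrite -natr1 in xt.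
(* The square of the node (a, t + 1) lies over x. *)
have ab : node lam a t.+1 by split => //; rewrite /= -/l -(ltr_nat R); lra.
have := square_top_le_omega (x := x) ab; rewrite -natr1 ger0_norm; last by lra.
by move=> /(_ ltac:(lra)); lra.
Qed.

Lemma row_left_edge_le_omega lam j x : is_partition lam -> (j < size lam)%N ->
  x < j.+1%:R - (nth 0 lam j)%:R -> x + 2 * (nth 0 lam j)%:R <= omega lam x.
Proof.
move=> lamP jl; set l := nth 0 lam j => xl.
have [xl0|xl0] := lerP (x + l%:R) 0.
  apply: le_trans (abs_le_omega lam x); rewrite ler0_norm; first lra.
  by have := ler0n R l; lra.
have /andP[tx xt] := truncn_itv (ltW xl0).
set t := Num.truncn _ in tx xt; rewrite -natr1 in xt.
have tj : (t <= j)%N by rewrite -ltnS -(ltr_nat R) -natr1; lra.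
have l_pos : (0 < l)%N by case: lamP => _ /all_nthP; apply.
(* The square of the node (t + 1, l) lies over x; row t + 1 is at least as
   long as row j + 1. *)
have ab : node lam t.+1 l.
  split; first by rewrite /= (leq_ltn_trans tj jl).
  by rewrite /= l_pos partition_nth_le ?tj.
have := square_top_le_omega (x := x) ab; rewrite -natr1 ler0_norm; last by lra.
by move=> /(_ ltac:(lra)); lra.
Qed.

Lemma row_top_le_omega lam j x : is_partition lam -> (j < size lam)%N ->
  row_top j.+1 (nth 0 lam j) x <= omega lam x.
Proof.
move=> lamP jl; set l := nth 0 lam j; rewrite /row_top.
have [xl|xl|xl] := ltgtP x (j.+1%:R - l%:R).
- by apply: le_trans (row_left_edge_le_omega lamP jl xl); rewrite ge_min lexx.
- apply: le_trans (row_right_edge_le_omega _ xl); first by rewrite ge_min lexx orbT.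
  by rewrite /= jl.
- have l_pos : (0 < l)%N by case: lamP => _ /all_nthP; apply.
  have ab : node lam j.+1 l by split; rewrite /= ?jl // l_pos /=.
  have := square_top_le_omega (x := x) ab; rewrite xl subrr normr0 ler01 => /(_ isT) top.
  by apply: le_trans top; rewrite ge_min; apply/orP; left; lra.
Qed.

Lemma omega_profile lam : is_partition lam -> omega lam = profile lam.
Proof.
move=> lamP; apply: funext => x; apply/le_anti; rewrite omega_le_profile /=.
have [->|[j jl ->]] := profile_attained lam x; first exact: abs_le_omega.
exact: row_top_le_omega.
Qed.

Lemma pm_affine_omega lam n : is_partition lam -> pm_affine_on (@omega R lam) n.
Proof. by move=> /omega_profile ->; apply: pm_affine_profile. Qed.

Lemma omega_attained lam x : is_partition lam -> omega lam x = `|x| \/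
  exists2 j, (j < size lam)%N & omega lam x = row_top j.+1 (nth 0 lam j) x.
Proof. by move=> /omega_profile ->; apply: profile_attained. Qed.

Lemma omega_far_left lam x : is_partition lam -> x <= - (sumn lam)%:R ->
  omega lam x = - x.
Proof.
move=> lamP xs; have x0 : x <= 0 by have := ler0n R (sumn lam); lra.
apply/le_anti; rewrite -(ler0_norm x0) abs_le_omega andbT.
have [->|[j jl ->]] := omega_attained x lamP; first by [].
rewrite ler0_norm // ge_min; apply/orP; left.
by have := nth_le_sumn lam j; rewrite -(ler_nat R); lra.
Qed.

Lemma slope_omega_far_left lam n : is_partition lam ->
  n <= - (sumn lam)%:Z - 1 -> slope (@omega R lam) n = -1.
Proof.
move=> lamP ns; have nsR : n%:~R + 1 <= - (sumn lam)%:R :> R.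
  have : (n + 1)%:~R <= (- (sumn lam)%:Z)%:~R :> R by rewrite ler_int; lia.
  by rewrite intrD1 intrN.
by rewrite /slope !omega_far_left //; [lra | apply: le_trans nsR; lra].
Qed.

End ClosedForm.

Lemma e_regular_equal_parts e lam j d : (0 < e)%N -> e_regular e lam ->
  (j < size lam)%N -> (d <= j.+1)%N ->
  (forall t, (t < d)%N -> nth 0 lam (j - t) = nth 0 lam j) -> (d < e)%N.
Proof.
move=> e0 reg jl dj eq_parts; rewrite ltnNge; apply/negP => ed.
(* [e_regular] counts rows from 1: its row j + 2 - e is the part of index j + 1 - e. *)
have := reg (j.+2 - e)%N ltac:(lia) ltac:(lia).
have -> : ((j.+2 - e + e - 1).-1 = j)%N by lia.
have -> : ((j.+2 - e).-1 = j - (e - 1))%N by lia.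
by rewrite eq_parts ?ltnn //; lia.
Qed.

Section OuterCornerRows.
Variables (R : realType) (lam : seq nat) (c : int).
Hypothesis lamP : is_partition lam.
Local Notation Om := (@omega R lam).

Lemma outer_corner_apex : slope Om (c - 1) = 1 -> slope Om c = -1 ->
  exists2 j, (j < size lam)%N &
    Om c%:~R = c%:~R + 2 * (nth 0 lam j)%:R /\ Om c%:~R = 2 * j.+1%:R - c%:~R.
Proof.
move=> up down; have pm n := pm_affine_omega R n lamP.
have Om_right : Om (c%:~R + 2^-1) = Om c%:~R - 2^-1.
  by rewrite (affine_on_unit pm (n := c)) ?down; [lra | apply/andP; split; lra].
have Om_left : Om (c%:~R - 2^-1) = Om c%:~R - 2^-1.
  rewrite (rising_run pm (i := c - 1) (c := c)) => [|n /andP[cn nc]|]; first by lra.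
    by have -> : n = c - 1 by lia.
  by rewrite intrB; apply/andP; split; lra.
have [Om_abs|[j jl Om_row]] := omega_attained (c%:~R : R) lamP.
  exfalso; have [c0|c0] := lerP 0 (c%:~R : R).
    have := abs_le_omega lam (c%:~R + 2^-1 : R).
    by rewrite Om_right Om_abs !ger0_norm //; lra.
  have := abs_le_omega lam (c%:~R - 2^-1 : R).
  by rewrite Om_left Om_abs !ltr0_norm //; lra.
exists j => //; move: Om_row; rewrite /row_top; set l := (nth 0 lam j)%:R.
move=> Om_row.
have [OmA OmB] : Om c%:~R <= c%:~R + 2 * l /\ Om c%:~R <= 2 * j.+1%:R - c%:~R.
  by apply/andP; rewrite -le_min -Om_row.
have := row_top_le_omega (c%:~R + 2^-1 : R) lamP jl.
have := row_top_le_omega (c%:~R - 2^-1 : R) lamP jl.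
rewrite /row_top Om_left Om_right !ge_min -/l => /orP[] ? /orP[] ?; lra.
Qed.

Section Run.
Variables (j d : nat).
Hypotheses (jl : (j < size lam)%N)
  (apex : Om c%:~R = c%:~R + 2 * (nth 0 lam j)%:R /\ Om c%:~R = 2 * j.+1%:R - c%:~R)
  (run : forall t : nat, (t <= d)%N -> Om (c%:~R - t%:R) = Om c%:~R - t%:R).

Lemma run_within_rows : (d <= j.+1)%N.
Proof.
rewrite leqNgt; apply/negP => jd.
have [_ apex_right] := apex; have j2 : j.+2%:R = j.+1%:R + 1 :> R by rewrite natr1.
have := abs_le_omega lam (c%:~R - j.+2%:R : R); rewrite run //.
by have := ler_norm (- (c%:~R - j.+2%:R : R)); rewrite normrN; lra.
Qed.

Lemma run_rows_equal t : (t < d)%N -> (t <= j)%N -> nth 0 lam (j - t) = nth 0 lam j.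
Proof.
move=> td tj.
have jtl : (j - t < size lam)%N by rewrite (leq_ltn_trans (leq_subr _ _) jl).
have tl : (j - t <= j < size lam)%N by rewrite leq_subr.
apply/eqP; rewrite eqn_leq (partition_nth_le lamP tl) andbT -(ler_nat R).
have [apex_left apex_right] := apex.
have jt : (j - t).+1%:R = j.+1%:R - t%:R :> R by rewrite -!natr1 natrB //; lra.
have t1 : t.+1%:R = t%:R + 1 :> R by rewrite natr1.
have := row_top_le_omega (c%:~R - t.+1%:R : R) lamP jtl.
by rewrite run // /row_top ge_min jt => /orP[]; lra.
Qed.
End Run.

Lemma rising_run_short e (i : int) : (0 < e)%N -> e_regular e lam -> i < c ->
  slope Om c = -1 -> (forall n, i <= n < c -> slope Om n = 1) -> c - i < e%:Z.
Proof.
move=> e0 reg ic down rise; have pm n := pm_affine_omega R n lamP.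
have [j jl apex] := outer_corner_apex (rise (c - 1) ltac:(lia)) down.
have run t : (t <= `|c - i|)%N -> Om (c%:~R - t%:R) = Om c%:~R - t%:R.
  move=> ti; have ct : (c - t%:Z)%:~R = c%:~R - t%:R :> R by rewrite intrB.
  rewrite (rising_run pm rise); first lra.
  by rewrite -ct; apply/andP; split; rewrite ler_int; lia.
have dj := run_within_rows apex run.
suff : (`|c - i| < e)%N by lia.
apply: (e_regular_equal_parts e0 reg jl dj) => t td.
by apply: (run_rows_equal jl apex run td); lia.
Qed.
End OuterCornerRows.

Lemma count_lt_succ (s : seq int) (m : int) : uniq s ->
  count (< (m + 1)) s = (count (< m) s + (m \in s))%N.
Proof.
move=> s_uniq; rewrite -count_uniq_mem // -count_predUI.
rewrite (@eq_count _ (predI _ _) pred0) ?count_pred0 ?addn0 => [|y /=]; last by lia.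
by apply: eq_count => y /=; lia.
Qed.

Section RisesAndFalls.
Variables (up : int -> bool) (rises falls : seq int) (m0 : int).
Hypotheses (down_below : forall n, n <= m0 -> ~~ up n)
  (risesE : forall n, (n \in rises) = ~~ up (n - 1) && up n)
  (fallsE : forall n, (n \in falls) = up (n - 1) && ~~ up n)
  (rises_sorted : sorted <%R rises) (falls_sorted : sorted <%R falls).

Lemma count_rises_falls n : count (< n) rises = (count (< n) falls + up (n - 1))%N.
Proof.
have low m : m <= m0 + 1 -> count (< m) rises = (count (< m) falls + up (m - 1))%N.
  move=> mm0; rewrite (negbTE (down_below _)); last by lia.
  rewrite !(@eq_in_count _ _ pred0) ?count_pred0 // => y.
    rewrite fallsE => /andP[uy _] /=; apply/negbTE; apply: contraL uy => ym.
    by apply: down_below; lia.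
  rewrite risesE => /andP[_ uy] /=; apply/negbTE; apply: contraL uy => ym.
  by apply: down_below; lia.
have [nm0|m0n] := lerP n (m0 + 1); first exact: low.
have -> : n = m0 + 1 + (`|(n - (m0 + 1))%R|%N)%:Z by lia.
elim: `|(n - (m0 + 1))%R|%N => [|t IH]; first by rewrite addr0; apply: low.
have -> : m0 + 1 + t.+1%:Z = (m0 + 1 + t%:Z) + 1 by lia.
rewrite !count_lt_succ ?lt_sorted_uniq // IH risesE fallsE addrK.
by case: (up _); case: (up _); rewrite /= ?addn0 ?addn1.
Qed.

Section KthCorner.
Variable k : nat.
Hypothesis k_fall : (k < size falls)%N.
Local Notation c := (nth 0 falls k).
Local Notation i := (nth 0 rises k).

Let sorted_le (s : seq int) : sorted <%R s -> sorted <=%R s.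
Proof. by rewrite lt_sorted_uniq_le => /andP[]. Qed.

Lemma count_rises_below_fall : count (< c) rises = k.+1.
Proof.
have := mem_nth 0 k_fall; rewrite fallsE => /andP[up_before _].
by rewrite count_rises_falls count_lt_nth // up_before addn1.
Qed.

Lemma rise_exists : (k < size rises)%N.
Proof. by rewrite -ltnS -count_rises_below_fall ltnS count_size. Qed.

Lemma rise_lt_fall : i < c.
Proof.
by apply: nth_count_lt (sorted_le rises_sorted) _; rewrite count_rises_below_fall.
Qed.

Lemma fall_before_rise : (0 < k)%N -> nth 0 falls k.-1 < i.
Proof.
move=> k0; apply: nth_count_lt (sorted_le falls_sorted) _.
have := count_rises_falls i; rewrite count_lt_nth ?rise_exists //.
have := mem_nth 0 rise_exists; rewrite risesE => /andP[/negbTE-> _].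
by rewrite addn0 => <-; rewrite prednK.
Qed.

Lemma up_from_rise_to_fall n : i <= n < c -> up n.
Proof.
move=> /andP[i_n n_c].
have lt_mono (x y : int) s : x <= y -> (count (< x) s <= count (< y) s)%N.
  by move=> xy; apply: sub_count => z /= /lt_le_trans; apply.
have rises_le : (k.+1 <= count (< (n + 1)%R) rises)%N.
  apply: leq_trans (lt_mono (i + 1) (n + 1) rises _); last by lia.
  rewrite count_lt_succ ?lt_sorted_uniq // count_lt_nth ?rise_exists //.
  by rewrite (mem_nth 0 rise_exists) addn1.
have falls_le : (count (< (n + 1)%R) falls <= k)%N.
  by rewrite -(count_lt_nth 0 falls_sorted k_fall); apply: lt_mono; rewrite lezD1.
move: rises_le; rewrite count_rises_falls addrK; case: (up n) => //=.
by rewrite addn0 => /leq_trans/(_ falls_le); rewrite ltnn.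
Qed.

End KthCorner.
End RisesAndFalls.

Lemma omega_corners (R : realType) lam (cs ins : seq int) k :
  is_partition lam ->
  sorted <%R cs -> (forall c, c \in cs <-> outer_corner (@omega R lam) c) ->
  sorted <%R ins -> (forall c, c \in ins <-> inner_corner (@omega R lam) c) ->
  (k < size cs)%N ->
  let c := nth 0 cs k in let i := nth 0 ins k in
  [/\ i < c, slope (@omega R lam) (i - 1) = -1,
      (forall n, i <= n < c -> slope (@omega R lam) n = 1),
      slope (@omega R lam) c = -1 &
      (0 < k)%N -> nth 0 cs k.-1 < i].
Proof.
move=> lamP cs_sorted csE ins_sorted insE k_cs c i.
have pm n := pm_affine_omega R n lamP.
pose up n := slope (@omega R lam) n == 1.
have upE n : slope (@omega R lam) n = 1 <-> up n by rewrite /up; split=> [->|/eqP].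
have downE n : slope (@omega R lam) n = -1 <-> ~~ up n.
  have m11 : (-1 == 1 :> R) = false by apply/negbTE/eqP; lra.
  rewrite /up; case: (slope_pm1 pm n) => ->; rewrite ?m11 ?eqxx; split => // E.
  by exfalso; lra.
have fallsE n : (n \in cs) = up (n - 1) && ~~ up n.
  apply/idP/andP => [/csE/(outer_corner_slope pm)[/upE ? /downE ?] //|[/upE ? /downE ?]].
  exact/csE/(outer_corner_slope pm).
have risesE n : (n \in ins) = ~~ up (n - 1) && up n.
  apply/idP/andP => [/insE/(inner_corner_slope pm)[/downE ? /upE ?] //|[/downE ? /upE ?]].
  exact/insE/(inner_corner_slope pm).
have down_below n : n <= - (sumn lam)%:Z - 1 -> ~~ up n.
  by move=> /(slope_omega_far_left R lamP)/downE.
have i_rise := mem_nth 0 (rise_exists down_below risesE fallsE ins_sorted cs_sorted k_cs).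
have c_fall := mem_nth 0 k_cs.
split.
- exact: (rise_lt_fall down_below risesE fallsE ins_sorted cs_sorted k_cs).
- by apply/downE; move: i_rise; rewrite risesE => /andP[].
- move=> n /(up_from_rise_to_fall down_below risesE fallsE ins_sorted cs_sorted k_cs).
  by move/upE.
- by apply/downE; move: c_fall; rewrite fallsE => /andP[].
- exact: (fall_before_rise down_below risesE fallsE ins_sorted cs_sorted k_cs).
Qed.

Section FlatteningStep.
Variable R : realFieldType.
Variables (F w0 w1 : R -> R) (a h i c : R).
Hypotheses (a_gtN1 : -1 < a) (a_lt1 : a < 1) (i_lt_c : i < c)
  (run_short : (1 - a) * (c - i) <= 1 + a)
  (F_rise : forall s, i <= s <= c -> F s = F c - (c - s))
  (F_fall : forall s, i - 1 <= s <= i -> F s = F i + (i - s)).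

Let L (s : R) : R := F c + a * (s - c).
(* [z] is where [L] meets the falling side of [F] on [[i - 1, i]]. *)
Let u : R := (1 - a) * (c - i) / (1 + a).
Let z : R := i - u.

Let u_def : u * (1 + a) = (1 - a) * (c - i).
Proof.
have a1 : 0 < 1 + a by move: a_gtN1; lra.
by rewrite /u divfK // lt0r_neq0.
Qed.

Let F_i : F i = F c - (c - i).
Proof. by rewrite F_rise ?lexx ?ltW //; lra. Qed.

Lemma gap_on_fall s : i - 1 <= s <= i -> L s - F s = (1 + a) * (s - z).
Proof. by move=> si; rewrite /L (F_fall si) F_i /z; move: u_def; lra. Qed.

Lemma gap_on_rise s : i <= s <= c -> L s - F s = (1 - a) * (c - s).
Proof. by move=> si; rewrite /L (F_rise si); lra. Qed.

Lemma meet_point_bounds : i - 1 <= z < i.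
Proof.
move: a_gtN1 a_lt1 i_lt_c run_short => a1 a2 ic ar.
have u_pos : 0 < u by rewrite /u divr_gt0 ?mulr_gt0 //; lra.
have u_le1 : u <= 1 by rewrite /u ler_pdivrMr ?mul1r //; lra.
by rewrite /z; apply/andP; split; lra.
Qed.

Lemma gap_pos s : z < s < c -> 0 < L s - F s.
Proof.
move: a_gtN1 a_lt1 meet_point_bounds => a1 a2 /andP[zi1 zi] /andP[zs sc].
have [si|i_s] := lerP s i.
  by rewrite gap_on_fall ?mulr_gt0; lra.
by rewrite gap_on_rise ?mulr_gt0; lra.
Qed.

Lemma gap_bounds s : z <= s <= c -> 0 <= L s - F s <= (1 - a) * (c - i).
Proof.
move: a_gtN1 a_lt1 meet_point_bounds => a1 a2 /andP[zi1 zi] /andP[zs sc].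
have [si|i_s] := lerP s i.
  have iz : (1 + a) * (i - z) = (1 - a) * (c - i).
    have -> : i - z = u by rewrite /z; lra.
    by rewrite mulrC u_def.
  have : (1 + a) * (s - z) <= (1 + a) * (i - z) by rewrite ler_wpM2l; lra.
  by rewrite gap_on_fall ?mulr_ge0 //=; lra.
have : (1 - a) * (c - s) <= (1 - a) * (c - i) by rewrite ler_wpM2l; lra.
by rewrite gap_on_rise ?mulr_ge0 //=; lra.
Qed.

Hypotheses (w0_F : forall s, i - 1 <= s -> w0 s = F s)
  (h_lt_c : h < c) (w0_h : w0 h = L h)
  (w0_ne_L : forall s, h < s < c -> w0 s != L s)
  (w1E : forall s, w1 s = if h <= s <= c then L s else w0 s).

Lemma flattening_start : h = z.
Proof.
move: meet_point_bounds i_lt_c h_lt_c => /andP[zi1 zi] ic hc.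
have [hz|zh|//] := ltgtP h z.
  have hzc : h < z < c by apply/andP; split; lra.
  have := w0_ne_L hzc; rewrite w0_F // -subr_eq0 -opprB oppr_eq0.
  by rewrite gap_on_fall ?subrr ?mulr0 ?eqxx //; apply/andP; split; lra.
have zhc : z < h < c by apply/andP; split; lra.
by have := gap_pos zhc; rewrite -w0_F ?w0_h ?subrr ?ltxx //; lra.
Qed.

Lemma flattening_step :
  [/\ i - 1 <= h < i, (forall s, ~ (i - 1 < s < c) -> w1 s = w0 s) &
      forall s, i - 1 < s < c -> 0 <= w1 s - w0 s <= (1 - a) * (c - i)].
Proof.
move: meet_point_bounds i_lt_c a_lt1 => /andP[zi1 zi] ic a2.
rewrite flattening_start; split; first by rewrite zi1 zi.
- move=> s s_out; rewrite w1E flattening_start; case: ifP => // /andP[zs sc].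
  have [si1|si1] := lerP s (i - 1).
    have -> : s = z by apply/le_anti/andP; split; lra.
    by rewrite -flattening_start w0_h.
  have -> : s = c.
    by apply/le_anti; rewrite sc leNgt; apply/negP => s_c; apply: s_out; rewrite si1 s_c.
  by rewrite w0_F /L ?subrr ?mulr0 ?addr0 //; lra.
- move=> s /andP[i_s sc]; rewrite w1E flattening_start; case: ifP => [/andP[zs _]|_].
    by rewrite w0_F; [apply: gap_bounds; rewrite zs ltW | lra].
  by rewrite subrr lexx /= mulr_ge0 //; lra.
Qed.
End FlatteningStep.

Lemma alpha_bounds (R : realType) (e : nat) (d : R) : (2 <= e)%N -> 0 <= d ->
  d + 1 <= e%:R ->
  [/\ -1 < alpha e :> R, alpha e < 1 :> R, (1 - alpha e) * d <= 1 + alpha e &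
      (1 - alpha e) * d <= e%:R].
Proof.
move=> e2 d0 de; have e2R : 2 <= e%:R :> R by rewrite (ler_nat R 2 e).
rewrite /alpha; set q := 2 / e%:R.
have qe : q * e%:R = 2 by rewrite /q divfK // lt0r_neq0 //; lra.
have q0 : 0 < q by rewrite /q divr_gt0 //; lra.
have q1 : q <= 1 by rewrite /q ler_pdivrMr ?mul1r //; lra.
have qd : 0 <= q * (e%:R - d - 1) by rewrite mulr_ge0 //; lra.
have qd' : 0 <= (1 - q) * d by rewrite mulr_ge0 //; lra.
by split; lra.
Qed.

Lemma outer_flattening_right (R : realType) e lam cs (w : nat -> R -> R) h :
  outer_flattening e lam cs w h -> sorted <%R cs ->
  forall j s, (j <= size cs)%N -> ((0 < j)%N -> (nth 0 cs j.-1)%:~R <= s) ->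
  w j s = omega lam s.
Proof.
move=> [w0 flat] cs_sorted; elim=> [|j IH] s js cs_s; first by rewrite w0.
have := flat j.+1 js; cbv zeta => -[_ _ _ ->] /=.
have cj_s := cs_s isT; case: ifP => [/andP[_ sc]|_].
  have -> : s = (nth 0 cs j)%:~R by apply/le_anti; rewrite sc cj_s.
  by rewrite subrr mulr0 addr0.
apply: IH => [|j0]; first exact: ltnW.
apply: le_trans cj_s; rewrite ler_int ltW //.
by apply: (sorted_ltn_nth lt_trans) => //; rewrite ?inE ?prednK // ltnW.
Qed.

Lemma omega_near_outer_corner (R : realType) e lam (cs ins : seq int) k :
  (2 <= e)%N -> is_partition lam -> e_regular e lam ->
  sorted <%R cs -> (forall c, c \in cs <-> outer_corner (@omega R lam) c) ->
  sorted <%R ins -> (forall c, c \in ins <-> inner_corner (@omega R lam) c) ->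
  (k < size cs)%N ->
  let c : R := (nth 0 cs k)%:~R in let i : R := (nth 0 ins k)%:~R in
  [/\ i < c, c - i + 1 <= e%:R,
      (forall s, i <= s <= c -> omega lam s = omega lam c - (c - s)),
      (forall s, i - 1 <= s <= i -> omega lam s = omega lam i + (i - s)) &
      (0 < k)%N -> (nth 0 cs k.-1)%:~R <= i - 1].
Proof.
move=> e2 lamP reg cs_sorted csE ins_sorted insE k_cs c i.
have [ic fall_before rise down prev] :=
  omega_corners lamP cs_sorted csE ins_sorted insE k_cs.
have short := rising_run_short lamP (ltnW e2) reg ic down rise.
have pm n := pm_affine_omega R n lamP.
split.
- by rewrite ltr_int.
- by rewrite /c /i -intrB -intrD1 -[e%:R]/(e%:Z%:~R) ler_int; lia.
- by move=> s; exact: (rising_run pm rise (x := s)).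
- by move=> s; exact: (falling_unit pm fall_before (x := s)).
- move=> /prev c_i; have : (nth 0 cs k.-1 + 1)%:~R <= i :> R by rewrite ler_int; lia.
  by rewrite intrD1; lra.
Qed.

Theorem proposition5p3 (R : realType) (e : nat) (lam : seq nat)
    (cs ins : seq int) (w : nat -> R -> R) (h : nat -> R) :
  (2 <= e)%N ->
  is_partition lam -> e_regular e lam ->
  sorted <%R cs -> (forall c : int, c \in cs <-> outer_corner (@omega R lam) c) ->
  sorted <%R ins -> (forall c : int, c \in ins <-> inner_corner (@omega R lam) c) ->
  size ins = (size cs).+1 ->
  outer_flattening e lam cs w h ->
  forall k : nat, (1 <= k <= size cs)%N ->
    let ck : R := (nth 0 cs k.-1)%:~R in
    let ik : R := (nth 0 ins k.-1)%:~R in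
    [/\ ik - 1 <= h k < ik,
        (forall s : R, ~ (ik - 1 < s < ck) -> w k s = w k.-1 s) &
        (forall s : R, ik - 1 < s < ck ->
           0 <= w k s - w k.-1 s <= e%:R)].
Proof.
move=> e2 lamP reg cs_sorted csE ins_sorted insE _ flat k k_range ck ik.
have k_cs : (k.-1 < size cs)%N by lia.
have [ic short F_rise F_fall prev] :=
  omega_near_outer_corner e2 lamP reg cs_sorted csE ins_sorted insE k_cs.
have w_right s : ik - 1 <= s -> w k.-1 s = omega lam s.
  move=> s_ge; apply: (outer_flattening_right flat cs_sorted); first lia.
  by move=> /prev /le_trans; apply.
have [_ flat_k] := flat; have := flat_k k k_range; cbv zeta.
move=> -[h_lt w_h w_ne w_k].
have d_pos : 0 <= ck - ik by rewrite subr_ge0 ltW.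
have [a_gt a_lt a_run a_e] := alpha_bounds e2 d_pos short.
have [h_range w_out w_in] :=
  flattening_step a_gt a_lt ic a_run F_rise F_fall w_right h_lt w_h w_ne w_k.
split => // s /w_in /andP[gap0 gap_e]; rewrite gap0 (le_trans gap_e) //.
Qed.
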